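(* Let $p$ be a positive random partition ($p_N(\pi)>0$ for all $N,\pi$) that generates the potential for TU games, and let $r^p$ be the restriction operator $$w^{r^p}_{-i}(S,\pi)=\frac{n}{n-s}\sum_{B\in\pi\cup\{\emptyset\}}\frac{p_N(\{S\}\cup\pi_{+i\leadsto B})}{p_{N\setminus\{i\}}(\{S\}\cup\pi)}\,w(S,\pi_{+i\leadsto B}).$$ Then (i) the $r^p$-Shapley value equals the $p$-Shapley value, $\mathrm{Sh}^{r^p}=\mathrm{Sh}^p$, where $$\mathrm{Sh}^p_i(w)=\sum_{(T,\tau)\in\mathcal{E}(N\setminus\{i\})}\Big(p_N(\{T\cup\{i\}\}\cup\tau)\,w(T\cup\{i\},\tau)-\frac{t}{n-t}\sum_{B\in\tau\cup\{\emptyset\}}p_N(\{T\}\cup\tau_{+i\leadsto B})\,w(T,\tau_{+i\leadsto B})\Big);$$ (ii) for TU games, $\mathrm{Sh}^{r^p}(v)=\mathrm{Sh}(v)$ for all $N\subseteq\mathbf{U}$ and all TU games $v$ on $N$.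
   Context: $\mathbf{U}$ is a finite set of players; cardinalities of $N,S,T,B$ are $n,s,t,b$. $\Pi(N)$ is the set of partitions of $N$ ($\Pi(\emptyset)=\{\emptyset\}$). A random partition is $p=(p_N)_{N\subseteq\mathbf{U}}$ with $p_N$ a probability distribution on $\Pi(N)$. $\pi_{+i\leadsto B}=(\pi\setminus\{B\})\cup\{B\cup\{i\}\}$ for $B\in\pi$, and $\pi_{+i\leadsto\emptyset}=\pi\cup\{\{i\}\}$. TU game on $N$: $v:2^N\to\mathbb{R}$, $v(\emptyset)=0$. Shapley value: $\mathrm{Sh}_i(v)=\sum_{S\subseteq N\setminus\{i\}}\frac{s!(n-s-1)!}{n!}(v(S\cup\{i\})-v(S))$. Potential: $\mathrm{Pot}(v)=\sum_{\emptyset\ne S\subseteq N}\frac{(s-1)!(n-s)!}{n!}v(S)$. Embedded coalitions $\mathcal{E}(N)=\{(S,\pi):S\subseteq N,\pi\in\Pi(N\setminus S)\}$. A TUX game on $N$ is $w:\mathcal{E}(N)\to\mathbb{R}$ with $w(\emptyset,\pi)=0$; $\mathbb{W}(N)$ is their set; a TU game $v$ is identified with the TUX game $w(S,\pi)=v(S)$. $\mathrm{E}_p(w)=\sum_{\pi\in\Pi(N)}p_N(\pi)\sum_{S\in\pi}w(S,\pi\setminus\{S\})$; $p$ generates the potential for TU games if $\mathrm{E}_p(v)=\mathrm{Pot}(v)$ for all TU games $v$. The formula for $w^{r^p}_{-i}$ is for all $N\subseteq\mathbf{U}$, $w\in\mathbb{W}(N)$, $i\in N$, $(S,\pi)\in\mathcal{E}(N\setminus\{i\})$,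 and defines $w^{r^p}_{-i}\in\mathbb{W}(N\setminus\{i\})$; this operator is path independent ($(w_{-i})_{-j}=(w_{-j})_{-i}$), so removal of a set $T$ of players, $w^{r^p}_{-T}$, is well defined. For such a path independent restriction operator $r$, the $r$-Shapley value is $\mathrm{Sh}^r(w)=\mathrm{Sh}(v^r_w)$, where $v^r_w(S)=w^r_{-(N\setminus S)}(S,\emptyset)$ for $S\subseteq N$. *)

From mathcomp Require Import all_boot all_order all_algebra.
Set Implicit Arguments. Unset Strict Implicit. Unset Printing Implicit Defensive.
Import Order.TTheory GRing.Theory Num.Theory.
Local Open Scope ring_scope.

Section Defs.
Variables (R : realFieldType) (U : finType).

(* Values of p N outside Pi(N) are irrelevant. *)
Definition random_partition (p : {set U} -> {set {set U}} -> R) : Prop :=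
  forall N : {set U},
    (forall pi, partition pi N -> 0 <= p N pi) /\
    \sum_(pi : {set {set U}} | partition pi N) p N pi = 1.

Definition positive_rp (p : {set U} -> {set {set U}} -> R) : Prop :=
  forall N pi, partition pi N -> 0 < p N pi.

(* TU games on N: v : 2^N -> R with v(set0) = 0 (values outside 2^N irrelevant). *)
Definition Pot (N : {set U}) (v : {set U} -> R) : R :=
  \sum_(S : {set U} | (S \subset N) && (S != set0))
     ((#|S|.-1)`! * (#|N| - #|S|)`!)%:R / (#|N|`!)%:R * v S.

Definition Ep (p : {set U} -> {set {set U}} -> R) (N : {set U})
    (w : {set U} -> {set {set U}} -> R) : R :=
  \sum_(pi : {set {set U}} | partition pi N)
     p N pi * \sum_(S in pi) w S (pi :\ S).

Definition tux_of_tu (v : {set U} -> R) : {set U} -> {set {set U}} -> R :=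
  fun S _ => v S.

Definition generates_potential (p : {set U} -> {set {set U}} -> R) : Prop :=
  forall (N : {set U}) (v : {set U} -> R), v set0 = 0 ->
    Ep p N (tux_of_tu v) = Pot N v.

(* TUX game on N: w(set0, pi) = 0 for every embedded coalition (set0, pi),
   pi in Pi(N). Values outside E(N) are irrelevant. *)
Definition tux_game (N : {set U}) (w : {set U} -> {set {set U}} -> R) : Prop :=
  forall pi, partition pi N -> w set0 pi = 0.

(* pi_{+i ~> B}; B = set0 means i forms a new singleton block *)
Definition plus_to (pi : {set {set U}}) (i : U) (B : {set U}) : {set {set U}} :=
  if B == set0 then [set i] |: pi else (i |: B) |: (pi :\ B).

Definition restr (p : {set U} -> {set {set U}} -> R) (N : {set U})
    (w : {set U} -> {set {set U}} -> R) (i : U) : {set U} -> {set {set U}} -> R :=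
  fun S pi =>
    (#|N|%:R / (#|N| - #|S|)%:R) *
    \sum_(B in pi :|: [set set0])
       (p N (S |: plus_to pi i B) / p (N :\ i) (S |: pi)) * w S (plus_to pi i B).

Fixpoint remove_seq (p : {set U} -> {set {set U}} -> R) (N : {set U})
    (w : {set U} -> {set {set U}} -> R) (s : seq U) : {set U} -> {set {set U}} -> R :=
  match s with
  | [::] => w
  | j :: s' => remove_seq p (N :\ j) (restr p N w j) s'
  end.

(* w_{-T} (removal in the enumeration order of T; path independence makes
   the order irrelevant) *)
Definition remove_set p N w (T : {set U}) := remove_seq p N w (enum T).

Definition Shapley (N : {set U}) (v : {set U} -> R) (i : U) : R :=
  \sum_(S : {set U} | S \subset N :\ i)
     ((#|S|`! * (#|N| - #|S| - 1)`!)%:R / (#|N|`!)%:R) * (v (i |: S) - v S).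

Definition v_of (p : {set U} -> {set {set U}} -> R) (N : {set U})
    (w : {set U} -> {set {set U}} -> R) : {set U} -> R :=
  fun S => remove_set p N w (N :\: S) S set0.

Definition rShapley p N w (i : U) : R := Shapley N (v_of p N w) i.

Definition pShapley (p : {set U} -> {set {set U}} -> R) (N : {set U})
    (w : {set U} -> {set {set U}} -> R) (i : U) : R :=
  \sum_(T : {set U} | T \subset N :\ i)
   \sum_(tau : {set {set U}} | partition tau ((N :\ i) :\: T))
     ( p N ((i |: T) |: tau) * w (i |: T) tau
       - (#|T|%:R / (#|N| - #|T|)%:R) *
         \sum_(B in tau :|: [set set0]) p N (T |: plus_to tau i B) * w T (plus_to tau i B)).

End Defs.

From mathcomp Require Import all_boot all_order all_algebra.
From mathcomp.algebra_tactics Require Import ring.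
Import Order.TTheory GRing.Theory Num.Theory.
Set Implicit Arguments. Unset Strict Implicit. Unset Printing Implicit Defensive.
Local Open Scope ring_scope.

(* For a nonempty S ⊆ N, removing the players of N ∖ S one by one turns w into
   the TU game whose value at S is the conditional expectation of w(S, π ∖ {S})
   given that S is a block of π ~ p_N.  Indeed, removing a player j ∉ S
   multiplies both Σ_σ p_N({S} ∪ σ) w(S, σ) and the probability
   Σ_σ p_N({S} ∪ σ) that S is a block by n/(n - s): the first because
   (σ', B) ↦ σ'_{+j⇝B} enumerates the partitions of N ∖ S exactly once, the
   second because generating the potential forces that probability to be
   (s - 1)!(n - s)!/n!.  With these values the Shapley weight s!(n - s - 1)!/n!
   turns the two conditional expectations into the two terms of Sh^p, and for a
   TU game the conditional expectation of v(S) is v(S). *)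

Section SetFacts.
Variable U : finType.
Implicit Types (A B N S : {set U}) (s : seq U).

Lemma setUD_subset A B : B \subset A -> B :|: A :\: B = A.
Proof. by move=> BA; rewrite -{2}(setID A B) (setIidPr BA). Qed.

Lemma setD1_notin (T : finType) (A : {set T}) a : a \notin A -> A :\ a = A.
Proof. by move=> aA; apply/setDidPl; rewrite disjoint_sym disjoints1. Qed.

Lemma setU1_neq0 j B : j |: B != set0.
Proof. by apply/set0Pn; exists j; rewrite setU11. Qed.

Lemma setD1_setDC N S j : (N :\ j) :\: S = (N :\: S) :\ j.
Proof. by rewrite setDDl setUC -setDDl. Qed.

Lemma setU1_setD1D N S j : j \in N -> j \notin S -> j |: ((N :\ j) :\: S) = N :\: S.
Proof. by move=> jN jS; rewrite setD1_setDC setD1K // inE jS. Qed.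

Lemma setD1D_notin N S j : j \notin (N :\ j) :\: S.
Proof. by rewrite in_setD setD11 andbF. Qed.

Lemma eq_mem_behead s A j : uniq (j :: s) -> j :: s =i A -> s =i A :\ j.
Proof.
move=> /andP[js _] sA x; rewrite in_setD1 -sA in_cons.
by have [->|] := eqVneq x j; first exact: negbTE.
Qed.

End SetFacts.

Section Partitions.
Variable U : finType.
Implicit Types (X N S B : {set U}) (sigma tau : {set {set U}}).

Lemma partitionU1_setD N S sigma : S != set0 -> S \subset N ->
  partition sigma (N :\: S) -> partition (S |: sigma) N.
Proof.
move=> S0 SN hsigma; rewrite -(setUD_subset SN).
by apply: partitionU1 => //; rewrite disjoints_subset setDE setCI setCK subsetUr.
Qed.

Lemma partition_setD_notin N S sigma : S != set0 ->
  partition sigma (N :\: S) -> S \notin sigma.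
Proof.
move=> S0 hsigma; apply: contra S0 => /(partitionS hsigma)/subsetDP[_].
by move/disjoint_setI0; rewrite setIid => ->.
Qed.

Lemma plus_toE tau j B : set0 \notin tau -> plus_to tau j B = (j |: B) |: (tau :\ B).
Proof.
by move=> tau0; rewrite /plus_to; case: eqVneq => // ->; rewrite setU0 setD1_notin.
Qed.

Lemma partition_plus_to X tau j B : j \notin X -> partition tau X ->
  B \in tau :|: [set set0] -> partition (plus_to tau j B) (j |: X).
Proof.
move=> jX htau; rewrite /plus_to; have [-> _|B0] := eqVneq B set0.
  by apply: partitionU1; rewrite ?disjoints1 // -[[set j]]setU0 setU1_neq0.
rewrite !inE (negbTE B0) orbF => Btau.
rewrite -(setUD_subset (partitionS htau Btau)) setUA.
apply: partitionU1 (partitionD1 htau Btau) (setU1_neq0 _ _) _.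
rewrite -setI_eq0; apply/eqP/setP=> x; rewrite !inE.
by have [->|] := eqVneq x j; [rewrite (negbTE jX) andbF | case: (x \in B)].
Qed.

Definition unplus_to sigma j :=
  let B := pblock sigma j :\ j in ((B |: (sigma :\ pblock sigma j)) :\ set0, B).

Lemma plus_toK X tau j B : j \notin X -> partition tau X ->
  B \in tau :|: [set set0] -> unplus_to (plus_to tau j B) j = (tau, B).
Proof.
move=> jX htau hB; have tau0 := negbT (partition0 htau).
have jtau C : C \in tau -> j \notin C.
  by move=> Ctau; apply: contra jX; apply/subsetP/(partitionS htau).
have jB : j \notin B by move: hB; rewrite !inE => /orP[/jtau|/eqP->]; rewrite ?inE.
have hsigma := partition_plus_to jX htau hB; rewrite plus_toE // in hsigma *.
rewrite /unplus_to (def_pblock (partition_trivIset hsigma) (setU11 _ _) (setU11 _ _)).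
rewrite !setU1K //; last first.
  by apply: contraT; rewrite !inE negbK => /andP[_ /jtau]; rewrite setU11.
congr pair; move: hB; rewrite !inE => /orP[/setD1K->|/eqP->]; first exact: setD1_notin.
by rewrite setU1K ?setD11 // setD1_notin.
Qed.

Lemma unplus_toP X sigma j : j \notin X -> partition sigma (j |: X) ->
  let: (tau, B) := unplus_to sigma j in
  [/\ partition tau X, B \in tau :|: [set set0] & plus_to tau j B = sigma].
Proof.
move=> jX hsigma; have tI := partition_trivIset hsigma.
have jP : j \in pblock sigma j by rewrite mem_pblock (cover_partition hsigma) setU11.
have Psigma : pblock sigma j \in sigma by rewrite pblock_mem // -mem_pblock.
rewrite /unplus_to; set P := pblock sigma j in jP Psigma *; set B := P :\ j.
have PE : P = j |: B by rewrite setD1K.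
have BX : B \subset X.
  apply/subsetP=> x /setD1P[xj /(subsetP (partitionS hsigma Psigma))].
  by rewrite !inE (negbTE xj).
have hrest : partition (sigma :\ P) (X :\: B).
  have := partitionD1 hsigma Psigma; congr partition; apply/setP=> x.
  by rewrite PE !inE; case: eqVneq => // ->; rewrite (negbTE jX).
have rest0 := negbT (partition0 hrest).
have Brest : B \notin sigma :\ P.
  apply/negP=> /setD1P[BP Bsigma].
  case/set0Pn: (partition_neq0 hsigma Bsigma) => x xB; move/setD1P: (xB) => [_ xP].
  by case/eqP: BP; rewrite -(def_pblock tI Bsigma xB) (def_pblock tI Psigma xP).
split.
- have [B0|B0] := eqVneq B set0.
    by rewrite B0 setU1K // -[X]setD0 -B0.
  rewrite setD1_notin; first exact: partitionU1_setD.
  by rewrite in_setU1 negb_or eq_sym B0 rest0.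
- by rewrite in_setU in_set1 in_setD1 setU11 andbT orNb.
rewrite plus_toE ?setD11 // -PE -[RHS](setD1K Psigma); congr (_ |: _).
apply/setP=> C; have [->|CB] := eqVneq C B; first by rewrite setD11 (negbTE Brest).
rewrite [C \in _ :\ B]in_setD1 CB [C \in _ :\ set0]in_setD1 in_setU1 (negbTE CB) /=.
by have [->|] //= := eqVneq C set0; rewrite (negbTE rest0).
Qed.

End Partitions.

Section BigPartitions.
Variables (R : Type) (idx : R) (op : Monoid.com_law idx) (U : finType).
Implicit Types (X N S : {set U}) (sigma tau : {set {set U}}) (F : {set {set U}} -> R).

Lemma big_partition_block N S F : S != set0 -> S \subset N ->
  \big[op/idx]_(pi | partition pi N && (S \in pi)) F pi
  = \big[op/idx]_(sigma | partition sigma (N :\: S)) F (S |: sigma).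
Proof.
move=> S0 SN; rewrite (reindex_onto (fun sigma => S |: sigma) (fun pi => pi :\ S)) /=.
  apply: eq_bigl => sigma; rewrite setU11 andbT.
  apply/andP/idP => [[hpi /eqP <-]|hsigma]; first exact: partitionD1 hpi (setU11 _ _).
  by rewrite partitionU1_setD // setU1K // (partition_setD_notin S0 hsigma).
by move=> pi /andP[_ Spi]; rewrite setD1K.
Qed.

Lemma big_plus_to X j F : j \notin X ->
  \big[op/idx]_(tau | partition tau X) \big[op/idx]_(B in tau :|: [set set0])
      F (plus_to tau j B)
  = \big[op/idx]_(sigma | partition sigma (j |: X)) F sigma.
Proof.
move=> jX; rewrite pair_big_dep /=.
rewrite (reindex_onto (fun tB => plus_to tB.1 j tB.2) (fun sigma => unplus_to sigma j)) /=.
  apply: eq_bigl => -[tau B] /=; apply/andP/andP => [[htau hB]|].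
    by rewrite partition_plus_to // (plus_toK jX).
  by case=> /(unplus_toP jX) + /eqP Etau; rewrite Etau; case.
by move=> sigma /(unplus_toP jX) /=; case: (unplus_to sigma j) => tau B [_ _ ->].
Qed.

End BigPartitions.

Section PotWeight.
Variable R : numFieldType.

Definition pot_weight (n s : nat) : R := ((s.-1)`! * (n - s)`!)%:R / (n`!)%:R.

Lemma natr_fact_neq0 n : (n`!)%:R != 0 :> R.
Proof. by rewrite pnatr_eq0 -lt0n fact_gt0. Qed.

Lemma pot_weight_neq0 n s : pot_weight n s != 0.
Proof. by rewrite /pot_weight natrM !mulf_neq0 ?invr_eq0 ?natr_fact_neq0. Qed.

Lemma pot_weight_down m s : (s <= m)%N ->
  m.+1%:R * pot_weight m.+1 s = (m.+1 - s)%:R * pot_weight m s.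
Proof.
move=> sm; rewrite /pot_weight subSn // !factS !natrM.
by field; rewrite natr_fact_neq0 addrC natr1 pnatr_eq0.
Qed.

Lemma pot_weightS n t : (0 < t < n)%N ->
  pot_weight n t.+1 = t%:R / (n - t)%:R * pot_weight n t.
Proof.
case: t => // t /= tn; rewrite /pot_weight -(subnSK tn) !factS !natrM.
by field; rewrite natr_fact_neq0 addrC natr1 pnatr_eq0.
Qed.

End PotWeight.

Lemma Shapley_pot_weight (R : realFieldType) (U : finType) (N : {set U})
    (v : {set U} -> R) i :
  Shapley N v i
  = \sum_(S : {set U} | S \subset N :\ i) pot_weight R #|N| #|S|.+1 * (v (i |: S) - v S).
Proof. by apply: eq_bigr => S _; rewrite /pot_weight subn1 subnS. Qed.

Section BlockMean.
Variables (R : realFieldType) (U : finType) (p : {set U} -> {set {set U}} -> R).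
Implicit Types (N S T : {set U}) (sigma : {set {set U}}).
Implicit Types (w : {set U} -> {set {set U}} -> R) (v : {set U} -> R).

(* [S |: sigma], for [sigma] a partition of [N :\: S], ranges over the
   partitions of N having S as a block: [block_mean N w S] is the conditional
   expectation of w(S, pi :\ S) given S \in pi. *)
Definition block_prob N S :=
  \sum_(sigma | partition sigma (N :\: S)) p N (S |: sigma).

Definition block_sum N w S :=
  \sum_(sigma | partition sigma (N :\: S)) p N (S |: sigma) * w S sigma.

Definition block_mean N w S := block_sum N w S / block_prob N S.

Lemma block_sum0 N w : tux_game N w -> block_sum N w set0 = 0.
Proof.
by move=> hw; rewrite /block_sum big1 // => sigma; rewrite setD0 => /hw ->; rewrite mulr0.
Qed.

Lemma block_mean0 N w : tux_game N w -> block_mean N w set0 = 0.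
Proof. by move=> hw; rewrite /block_mean block_sum0 ?mul0r. Qed.

Lemma restr_tux_game N w j : j \in N -> tux_game N w ->
  tux_game (N :\ j) (restr p N w j).
Proof.
move=> jN hw sigma hsigma; rewrite /restr big1 ?mulr0 // => B hB.
by rewrite hw ?mulr0 // -(setD1K jN) partition_plus_to // setD11.
Qed.

Lemma remove_seq_set0 s N w : uniq s -> s =i N -> tux_game N w ->
  remove_seq p N w s set0 set0 = 0.
Proof.
elim: s N w => [|j s IH] N w /= us sN hw.
  have N0 : N = set0 by apply/setP=> x; rewrite -sN inE.
  by apply: hw; rewrite N0 partition_set0.
have jN : j \in N by rewrite -sN mem_head.
apply: IH; [by case/andP: us | exact: eq_mem_behead | exact: restr_tux_game].
Qed.

Hypothesis hpos : positive_rp p.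

Lemma block_mean_self S w : S != set0 -> block_mean S w S = w S set0.
Proof.
move=> S0; have hS : partition (S |: set0) S.
  by apply: partitionU1_setD; rewrite ?setDv ?partition_set0.
rewrite /block_mean /block_sum /block_prob setDv.
rewrite !(big_pred1 set0) => [|sigma|sigma]; try exact: partition_set0.
by rewrite mulrAC divff ?mul1r // lt0r_neq0 ?hpos.
Qed.

Lemma block_sum_restr N S w j : j \in N -> j \notin S -> S != set0 -> S \subset N ->
  block_sum (N :\ j) (restr p N w j) S = #|N|%:R / (#|N| - #|S|)%:R * block_sum N w S.
Proof.
move=> jN jS S0 SN; have SNj : S \subset N :\ j by rewrite subsetD1 SN jS.
rewrite /block_sum -(setU1_setD1D jN jS) -big_plus_to ?setD1D_notin //.
rewrite mulr_sumr; apply: eq_bigr => tau htau.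
have p0 : p (N :\ j) (S |: tau) != 0 by apply/lt0r_neq0/hpos/partitionU1_setD.
rewrite /restr mulrCA mulr_sumr; congr (_ * _); apply: eq_bigr => B _.
by field.
Qed.

Hypothesis hgen : generates_potential p.

Lemma block_prob_pot_weight N S : S != set0 -> S \subset N ->
  block_prob N S = pot_weight R #|N| #|S|.
Proof.
move=> S0 SN; pose v X : R := (X == S)%:R.
have v0 : v set0 = 0 by rewrite /v eq_sym (negbTE S0).
have PotE : Pot N v = pot_weight R #|N| #|S|.
  rewrite /Pot (bigD1 S) /=; last by rewrite SN S0.
  by rewrite /v eqxx mulr1 big1 ?addr0 // => X /andP[_ /negbTE ->]; rewrite mulr0.
have EpE : Ep p N (tux_of_tu v) = \sum_(pi | partition pi N && (S \in pi)) p N pi.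
  rewrite /Ep [RHS]big_mkcondr /=; apply: eq_bigr => pi _; rewrite /tux_of_tu /v.
  have [Spi|Spi] := boolP (S \in pi).
    by rewrite (bigD1 S) //= eqxx big1 ?addr0 ?mulr1 // => B /andP[_ /negbTE ->].
  by rewrite big1 ?mulr0 // => B Bpi; rewrite (negbTE (memPn Spi B Bpi)).
by rewrite -PotE -hgen // EpE big_partition_block.
Qed.

Lemma block_prob_setD1 N S j : j \in N -> j \notin S -> S != set0 -> S \subset N ->
  block_prob (N :\ j) S = #|N|%:R / (#|N| - #|S|)%:R * block_prob N S.
Proof.
move=> jN jS S0 SN; have SNj : S \subset N :\ j by rewrite subsetD1 SN jS.
rewrite !block_prob_pot_weight // (cardsD1 j N) jN add1n.
have sm := subset_leq_card SNj.
rewrite mulrAC pot_weight_down // [X in X / _]mulrC mulfK //.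
by rewrite pnatr_eq0 subn_eq0 -ltnNge ltnS.
Qed.

Lemma block_mean_restr N S w j : j \in N -> j \notin S -> S != set0 -> S \subset N ->
  block_mean (N :\ j) (restr p N w j) S = block_mean N w S.
Proof.
move=> jN jS S0 SN; have sn : (#|S| < #|N|)%N.
  by apply: proper_card; apply/properP; split => //; exists j.
rewrite /block_mean block_sum_restr // block_prob_setD1 // invfM mulrACA divff ?mul1r //.
by rewrite mulf_neq0 ?invr_eq0 // pnatr_eq0 -lt0n ?subn_gt0 // (leq_ltn_trans _ sn).
Qed.

Lemma remove_seq_block_mean s N S w : uniq s -> S != set0 -> S \subset N ->
  s =i N :\: S -> remove_seq p N w s S set0 = block_mean N w S.
Proof.
elim: s N w => [|j s IH] N w /= us S0 SN sNS.
  have NS : N = S.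
    apply/eqP; rewrite eqEsubset SN andbT -setD_eq0.
    by apply/eqP/setP=> x; rewrite -sNS inE.
  by rewrite NS block_mean_self.
have /setDP[jN jS] : j \in N :\: S by rewrite -sNS mem_head.
rewrite IH ?block_mean_restr //; first by case/andP: us.
  by rewrite subsetD1 SN jS.
by rewrite setD1_setDC; apply: eq_mem_behead.
Qed.

Lemma v_of_block_mean N S w : tux_game N w -> S \subset N ->
  v_of p N w S = block_mean N w S.
Proof.
move=> hw SN; rewrite /v_of /remove_set; have [->|S0] := eqVneq S set0.
  rewrite block_mean0 //; apply: remove_seq_set0; rewrite ?enum_uniq //.
  by move=> x; rewrite mem_enum setD0.
by apply: remove_seq_block_mean; rewrite ?enum_uniq // => x; rewrite mem_enum.
Qed.

Lemma pot_weight_block_mean N S w : tux_game N w -> S \subset N ->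
  pot_weight R #|N| #|S| * block_mean N w S = block_sum N w S.
Proof.
move=> hw SN; have [->|S0] := eqVneq S set0.
  by rewrite block_mean0 ?block_sum0 ?mulr0.
by rewrite /block_mean block_prob_pot_weight // mulrC divfK ?pot_weight_neq0.
Qed.

Lemma v_of_tux_of_tu N S v : v set0 = 0 -> S \subset N ->
  v_of p N (tux_of_tu v) S = v S.
Proof.
move=> v0 SN; have hw : tux_game N (tux_of_tu v) by move=> ? _.
rewrite v_of_block_mean //; have [->|S0] := eqVneq S set0; first by rewrite block_mean0.
rewrite /block_mean /block_sum /tux_of_tu -mulr_suml -/(block_prob N S).
by rewrite mulrAC divff ?mul1r // block_prob_pot_weight // pot_weight_neq0.
Qed.

Lemma rShapley_pShapley N w i : tux_game N w -> i \in N ->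
  rShapley p N w i = pShapley p N w i.
Proof.
move=> hw iN; rewrite /rShapley Shapley_pot_weight /pShapley.
apply: eq_bigr => T /subsetD1P[TN iT].
have iTN : i |: T \subset N by rewrite subUset sub1set iN TN.
rewrite !v_of_block_mean // mulrBr sumrB -mulr_sumr; congr (_ - _).
  have cardT : #|i |: T| = #|T|.+1 by rewrite cardsU1 iT.
  by rewrite -cardT pot_weight_block_mean // /block_sum setDDl.
rewrite (big_plus_to _ (fun sigma => p N (T |: sigma) * w T sigma)) ?setD1D_notin //.
rewrite setU1_setD1D // -/(block_sum N w T).
have [->|T0] := eqVneq T set0; first by rewrite block_mean0 ?block_sum0 ?mulr0.
have tn : (#|T| < #|N|)%N.
  by rewrite (cardsD1 i N) iN ltnS subset_leq_card // subsetD1 TN iT.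
by rewrite pot_weightS ?card_gt0 ?T0 // -(mulrA _ (pot_weight _ _ _)) pot_weight_block_mean.
Qed.

End BlockMean.

Theorem corollary2 (R : realFieldType) (U : finType)
    (p : {set U} -> {set {set U}} -> R)
    (hp : random_partition p) (hpos : positive_rp p)
    (hgen : generates_potential p) :
  (forall (N : {set U}) (w : {set U} -> {set {set U}} -> R) (i : U),
      tux_game N w -> i \in N -> rShapley p N w i = pShapley p N w i) /\
  (forall (N : {set U}) (v : {set U} -> R) (i : U),
      v set0 = 0 -> i \in N -> rShapley p N (tux_of_tu v) i = Shapley N v i).
Proof.
split=> [N w i|N v i v0 iN]; first exact: rShapley_pShapley.
apply: eq_bigr => S /subsetD1P[SN iS].
have iSN : i |: S \subset N by rewrite subUset sub1set iN SN.
by rewrite !v_of_tux_of_tu.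
Qed.
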